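(* Let $X$ be a $T_4$ locally compact topological space and let $\kappa$ be an uncountable cardinal. Then the following are equivalent: (i) $C_0(X)$ is $\mathrm{SQ}_{<\kappa}$; (ii) $C_0(X)$ is $\mathrm{ASQ}_{<\kappa}$; (iii) for every family $\mathscr K$ of compact subsets of $X$ with $|\mathscr K|<\kappa$, the union $\bigcup\mathscr K$ is not dense in $X$.
   Context: $C_0(X)$ denotes the Banach space of real-valued continuous functions on $X$ vanishing at infinity, with the supremum norm. For a Banach space $Z$ with unit sphere $S_Z$ and a cardinal $\kappa$: $Z$ is $\mathrm{ASQ}_{<\kappa}$ if for every set $A\subset S_Z$ with $|A|<\kappa$ and every $\varepsilon>0$ there exists $y\in S_Z$ with $\|x\pm y\|\le 1+\varepsilon$ for all $x\in A$; $Z$ is $\mathrm{SQ}_{<\kappa}$ if for every set $A\subset S_Z$ with $|A|<\kappa$ there exists $y\in S_Z$ with $\|x\pm y\|\le 1$ for all $x\in A$. *)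

From HB Require Import structures.
From mathcomp Require Import all_boot all_order all_algebra.
From mathcomp Require Import all_classical all_reals all_analysis.
Set Implicit Arguments. Unset Strict Implicit. Unset Printing Implicit Defensive.
Import Order.TTheory GRing.Theory Num.Theory.
Import numFieldNormedType.Exports.
Local Open Scope classical_set_scope.
Local Open Scope ring_scope.

Definition card_lt (T U : Type) (A : set T) (B : set U) : Prop :=
  (A #<= B)%card /\ ~ (B #<= A)%card.

Section C0.
Variables (R : realType) (X : topologicalType).

Definition C0 (f : X -> R) : Prop :=
  continuous f /\ forall e : R, 0 < e -> compact [set x | e <= `|f x|].

Definition supnorm (f : X -> R) : R := sup (range (fun x => `|f x|)).

Definition C0_sphere : set (X -> R) := [set f | C0 f /\ supnorm f = 1].

(* ASQ_{<kappa}, the cardinal kappa being represented as the cardinality of [set: K] *)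
Definition C0_ASQ_lt (K : Type) : Prop :=
  forall A : set (X -> R), A `<=` C0_sphere -> card_lt A [set: K] ->
  forall e : R, 0 < e -> exists2 y, C0_sphere y &
    forall x, A x -> supnorm (x \+ y) <= 1 + e /\ supnorm (x \- y) <= 1 + e.

Definition C0_SQ_lt (K : Type) : Prop :=
  forall A : set (X -> R), A `<=` C0_sphere -> card_lt A [set: K] ->
  exists2 y, C0_sphere y &
    forall x, A x -> supnorm (x \+ y) <= 1 /\ supnorm (x \- y) <= 1.

End C0.

From HB Require Import structures.
From mathcomp Require Import all_boot all_order all_algebra.
From mathcomp Require Import all_classical all_reals all_analysis.
From mathcomp Require Import zify lra.
Import Order.TTheory GRing.Theory Num.Theory.
Import numFieldNormedType.Exports.
Local Open Scope classical_set_scope.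
Local Open Scope ring_scope.

(* If fewer than kappa compact sets had dense
   union, take for each of them a norm-one bump equal to 1 on it: an ASQ
   witness [y] for these bumps with epsilon = 1/4 exceeds 3/4 in modulus on a
   nonempty open set, which meets one of the compact sets [C], and there one of
   [g_C +- y] has modulus [1 + |y| > 5/4].  Conversely, the level sets
   [1/(n+1) <= |f|] of fewer than kappa functions [f] of the unit sphere are
   still fewer than kappa compact sets, since kappa is uncountable and
   [|A x N| <= |A|] for uncountable [A]; so a nonempty open set [W] misses all
   of them, every [f] vanishes on [W], and a norm-one bump supported in [W] is
   an exact SQ witness.  The bumps come from Urysohn's lemma applied inside an
   open set with compact closure, which local compactness provides. *)

Lemma nat_pairing :
  exists2 pi : nat * nat -> nat, injective pi & forall n, exists p, pi p = n.
Proof.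
have /pcard_eqP/bijPex[f [_ finj fsurj]] := card_nat2.
exists f; first by move=> p q; apply: finj; rewrite inE.
by move=> n; have [p _ <-] := fsurj n I; exists p.
Qed.

Lemma infinite_set_nat_inj T (A : set T) : infinite_set A ->
  exists2 e : nat -> T, (forall n, A (e n)) & injective e.
Proof.
case/infiniteP/card_leP => f.
exists (fun n => set_val (f (SigSub (mem_set (I : [set: nat] n))))).
  by move=> n; exact: set_valP.
move=> m n /val_inj /(@inj _ _ _ f); rewrite !inE => /(_ I I).
by move/(congr1 val).
Qed.

Section nat_absorption.
Local Open Scope nat_scope.
Variables (T : Type) (A : set T).

(* [G] is the graph of a bijection from [D `*` [set: nat]] onto [D], where
   [D `<=` A] is the range of [G]. *)
Definition nat_absorbing (G : set ((T * nat) * T)) : Prop :=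
  [/\ (forall a n b, G ((a, n), b) -> A a /\ A b),
      (forall p b b', G (p, b) -> G (p, b') -> b = b'),
      (forall p p' b, G (p, b) -> G (p', b) -> p = p') &
      (forall a n, (exists b, G ((a, n), b)) <-> (exists p, G (p, a)))].

Lemma nat_absorbing_bigcup (F : set (set ((T * nat) * T))) :
  F `<=` nat_absorbing -> total_on F subset ->
  nat_absorbing (\bigcup_(G in F) G).
Proof.
move=> Fabs Ftot; split.
- by move=> a n b [G FG Gab]; have [GA _ _ _] := Fabs G FG; exact: GA Gab.
- move=> p b b' [G FG Gb] [G' FG' Gb'].
  have [GG'|G'G] := Ftot _ _ FG FG'.
    by have [_ Gfun _ _] := Fabs G' FG'; exact: Gfun (GG' _ Gb) Gb'.
  by have [_ Gfun _ _] := Fabs G FG; exact: Gfun Gb (G'G _ Gb').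
- move=> p p' b [G FG Gp] [G' FG' Gp'].
  have [GG'|G'G] := Ftot _ _ FG FG'.
    by have [_ _ Ginj _] := Fabs G' FG'; exact: Ginj (GG' _ Gp) Gp'.
  by have [_ _ Ginj _] := Fabs G FG; exact: Ginj Gp (G'G _ Gp').
- move=> a n; split.
    case=> b [G FG Gb]; have [_ _ _ Gdom] := Fabs G FG.
    by have [p Gp] := (Gdom a n).1 (ex_intro _ b Gb); exists p, G.
  case=> p [G FG Gp]; have [_ _ _ Gdom] := Fabs G FG.
  by have [b Gb] := (Gdom a n).2 (ex_intro _ p Gp); exists b, G.
Qed.

(* An uncountable rest of [A] would contain an injective sequence [e], and
   [G] would extend by [(e m, n) |-> e (pi (m, n))]. *)
Lemma nat_absorbing_maximal_countable {G} : nat_absorbing G ->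
  (forall G', G `<` G' -> ~ nat_absorbing G') ->
  countable (A `\` [set b | exists p, G (p, b)]).
Proof.
move=> [GA Gfun Ginj Gdom] Gmax; apply: contrapT => ncE.
have /infinite_set_nat_inj[e eA einj] :
    infinite_set (A `\` [set b | exists p, G (p, b)]).
  by move/finite_set_countable.
have [pi piinj pisurj] := nat_pairing.
pose G' := G `|` [set x | exists m n, x = ((e m, n), e (pi (m, n)))].
have eD m : ~ (exists p, G (p, e m)) by have [] := eA m.
have eG m n b : ~ G ((e m, n), b).
  by move=> Gb; apply: (eD m); apply/(Gdom _ n); exists b.
apply: (Gmax G').
  split; first by move=> x Gx; left.
  move=> /(_ ((e 0, 0), e (pi (0, 0)))) G'G.
  by have /G'G/eG : G' ((e 0, 0), e (pi (0, 0))) by right; exists 0, 0.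
split.
- move=> a n b [/GA //|[m [k [-> _ ->]]]].
  by split; [have [] := eA m | have [] := eA (pi (m, k))].
- move=> p b b' [Gb|[m [k [-> ->]]]] [Gb'|[m' [k' [pE ->]]]].
  + exact: Gfun Gb Gb'.
  + by move: Gb; rewrite pE => /eG.
  + by move/eG: Gb'.
  + by move/einj: pE => ->.
- move=> p p' b [Gb|[m [k [-> ->]]]] [Gb'|[m' [k' [pE bE]]]].
  + exact: Ginj Gb Gb'.
  + by exfalso; apply: (eD (pi (m', k'))); exists p; rewrite -bE.
  + by exfalso; apply: (eD (pi (m, k))); exists p'.
  + by move: bE => /einj /piinj [-> ->].
- move=> a n; split.
  + case=> b [Gb|[m [k [-> _ _]]]].
      by have [p Gp] := (Gdom a n).1 (ex_intro _ b Gb); exists p; left.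
    have [[m' k'] pE] := pisurj m.
    by exists (e m', k'); right; exists m', k'; rewrite pE.
  + case=> p [Gp|[m [k [_ ->]]]].
      by have [b Gb] := (Gdom a n).2 (ex_intro _ p Gp); exists b; left.
    by exists (e (pi (pi (m, k), n))); right; exists (pi (m, k)), n.
Qed.

Lemma setXnat_card_le : ~ countable A -> (A `*` [set: nat] #<= A)%card.
Proof.
move=> ncA; have [G [absG Gmax]] := Zorn_bigcup nat_absorbing_bigcup.
have [GA _ Ginj Gdom] := absG.
have cE := nat_absorbing_maximal_countable absG Gmax.
have [b0 Db0] : exists b0, exists p, G (p, b0).
  apply: contrapT => nD; apply: ncA; apply: sub_countable cE.
  by apply: subset_card_le => a Aa; split => // Da; apply: nD; exists a.
have [c cinj] := countable_injP _ cE.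
have [pi piinj _] := nat_pairing.
(* The range [D] of [G] absorbs [D `*` nat] at even indices and, through
   [b0], the countable rest of [A] times [nat] at odd ones. *)
pose Q (p : T * nat) (b : T) :=
  if pselect (exists q, G (q, p.1)) is left _ then G ((p.1, 2 * p.2), b)
  else G ((b0, (2 * pi (c p.1, p.2)).+1), b).
have /choice[h hQ] : forall p, exists b, A p.1 -> Q p b.
  move=> [a n]; rewrite /Q /=; case: pselect => [Da|_].
    by have [b Gb] := (Gdom a (2 * n)).2 Da; exists b.
  by have [b Gb] := (Gdom b0 (2 * pi (c a, n)).+1).2 Db0; exists b.
have [f] : $|{injfun A `*` [set: nat] >-> A}|.
  apply/injfunPex; exists h.
    move=> [a n] [/= Aa _]; have := hQ (a, n) Aa; rewrite /Q /=.
    by case: pselect => _ /GA [].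
  move=> [a n] [a' n']; rewrite !inE => -[/= Aa _] [/= Aa' _] hE.
  have := hQ (a, n) Aa; have := hQ (a', n') Aa'; rewrite /Q /= -hE.
  case: pselect => Da'; case: pselect => Da; move=> /Ginj G' /G' [].
  - by move=> -> ?; congr pair; lia.
  - by move=> _ ?; exfalso; lia.
  - by move=> _ ?; exfalso; lia.
  move/eqP; rewrite eqn_pmul2l // => /eqP /piinj [ca ->].
  by congr pair; apply: (cinj _ _ _ _ (esym ca)); rewrite inE.
exact: inj_card_le f.
Qed.

End nat_absorption.

Lemma card_le_lt_trans {T U V : Type} {A : set T} {B : set U} {C : set V} :
  (B #<= A)%card -> card_lt A C -> card_lt B C.
Proof.
move=> leBA [leAC nleCA]; split; first exact: card_le_trans leBA leAC.
by move=> leCB; apply: nleCA; exact: card_le_trans leCB leBA.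
Qed.

Lemma countable_card_lt {U V : Type} {B : set U} {C : set V} :
  ~ countable C -> countable B -> card_lt B C.
Proof.
move=> nC cB; split.
  apply: card_le_trans cB _; apply/infiniteP => /finite_set_countable.
  exact: nC.
by move=> CB; apply: nC; exact: card_le_trans CB cB.
Qed.

Lemma card_lt_setXnat {T V : Type} {A : set T} {C : set V} :
  ~ countable C -> card_lt A C -> card_lt (A `*` [set: nat]) C.
Proof.
move=> nC ltAC; have [cA|ncA] := pselect (countable A).
  by apply: countable_card_lt => //; exact: countableX (countableP _).
exact: card_le_lt_trans (@setXnat_card_le _ A ncA) ltAC.
Qed.

Section supnorm.
Context {R : realType} {X : topologicalType}.
Implicit Types (f g : X -> R) (M : R).

Lemma normr_le_supnorm {f M} x : (forall y, `|f y| <= M) -> `|f x| <= supnorm f.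
Proof.
move=> fM; apply: ub_le_sup; last by exists x.
by exists M => _ [y _ <-]; exact: fM.
Qed.

Lemma supnorm_le {f M} (x0 : X) : (forall y, `|f y| <= M) -> supnorm f <= M.
Proof.
by move=> fM; apply: ge_sup; [exists `|f x0|, x0 | move=> _ [y _ <-]].
Qed.

(* [sup] of a set without a supremum is [0], so norm 1 forces boundedness. *)
Lemma C0_sphere_has_sup {f} : C0_sphere f -> has_sup (range (fun x => `|f x|)).
Proof.
move=> [_ f1]; apply: contrapT => /sup_out; rewrite -/(supnorm f) f1.
by move/eqP; rewrite oner_eq0.
Qed.

Lemma C0_sphere_le1 {f} : C0_sphere f -> forall x, `|f x| <= 1.
Proof.
move=> fS x; have [_ ub] := C0_sphere_has_sup fS.
by case: fS => _ <-; apply: ub_le_sup => //; exists x.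
Qed.

Lemma C0_sphere_near1 {f} e : C0_sphere f -> 0 < e ->
  exists x, 1 - e < `|f x|.
Proof.
move=> fS e0; have [_ [x _ <-]] := sup_adherent e0 (C0_sphere_has_sup fS).
by case: fS => _ f1; rewrite -/(supnorm f) f1; exists x.
Qed.

Lemma supnorm_disjoint_le1 f g (x0 : X) :
  (forall x, f x = 0 \/ g x = 0) ->
  (forall x, `|f x| <= 1) -> (forall x, `|g x| <= 1) ->
  supnorm (f \+ g) <= 1 /\ supnorm (f \- g) <= 1.
Proof.
move=> fg0 f1 g1; split; apply: (supnorm_le x0) => x /=.
  by case: (fg0 x) => ->; rewrite ?add0r ?addr0.
by case: (fg0 x) => ->; rewrite ?sub0r ?subr0 ?normrN.
Qed.

End supnorm.

Section normr_level_sets.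
Context {R : realType} {X : topologicalType} {f : X -> R}.
Hypothesis fC : continuous f.

Let normfC : continuous (fun x => `|f x|).
Proof.
by move=> x; apply: continuous_comp; [exact: fC | exact: norm_continuous].
Qed.

Lemma closed_normr_ge e : closed [set x | e <= `|f x|].
Proof. exact: (continuous_closedP _).1 normfC _ (@closed_ge R e). Qed.

Lemma open_normr_gt e : open [set x | e < `|f x|].
Proof.
rewrite (_ : [set x | _] = ~` [set x | `|f x| <= e]).
  exact/closed_openC/((continuous_closedP _).1 normfC _ (@closed_le R e)).
by apply/seteqP; split => x /=; rewrite ltNge => /negP.
Qed.

End normr_level_sets.

Lemma compact_open_relcompact_nbhs {X : topologicalType} (C U : set X) :
  locally_compact [set: X] -> compact C -> open U -> C `<=` U ->
  exists W, [/\ open W, C `<=` W, W `<=` U & exists2 D, compact D & W `<=` D].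
Proof.
move=> lcX cC oU CU.
pose P W := [/\ open W, W `<=` U & exists2 D, compact D & W `<=` D].
have PU W0 W1 : P W0 -> P W1 -> P (W0 `|` W1).
  move=> [oW0 W0U [D0 cD0 WD0]] [oW1 W1U [D1 cD1 WD1]]; split.
  - exact: openU.
  - by move=> x [/W0U|/W1U].
  - exists (D0 `|` D1); first exact: compactU.
    by move=> x [/WD0|/WD1]; [left|right].
(* [P] is closed under binary unions, so the [P]-sets form a directed
   family; compactness of [C] then yields one [P]-set containing [C]. *)
pose F := filter_from P (fun W0 => [set W | P W /\ W0 `<=` W]).
have FF : Filter F.
  apply: filter_from_filter.
    exists set0; split => //; first exact: open0.
    by exists set0; first exact: compact0.
  move=> W0 W1 PW0 PW1; exists (W0 `|` W1); first exact: PU.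
  by move=> W [PW W01]; split; split => // x ?; apply: W01; [left|right].
have [x Cx|W0 PW0] := (compact_near_coveringP C).1 cC _ F (fun W x => W x) FF.
  have [D0 D0x [cD0 _]] := lcX x I.
  pose O := D0° `&` U.
  have oO : open O := openI (@open_interior _ D0) oU.
  have PO : P O.
    by split=> //; [move=> y [] | exists D0 => // y [/interior_subset]].
  exists (O, [set W | P W /\ O `<=` W]).
    split; last by exists O.
    apply: open_nbhs_nbhs; split=> //.
    split; last exact: CU.
    exact: filterS (fun y (D0y : setT y -> D0 y) => D0y I) D0x.
  by move=> [y W] /= [Oy [_ /(_ y Oy)]].
move=> /(_ W0 (conj PW0 (@subset_refl _ W0))) CW0.
by case: PW0 => oW0 W0U W0D; exists W0.
Qed.

Section compact_bump.
Context {R : realType} {X : topologicalType}.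
Hypotheses (T1X : accessible_space X) (T4X : normal_space X).
Hypothesis lcX : locally_compact [set: X].

Let hausdorffX : hausdorff_space X.
Proof.
rewrite open_hausdorff => x y xy.
have cl1 z : closed [set z] := @accessible_closed_set1 X T1X z.
have [|U [V [oU oV xU yV UV]]] := (@normal_openP R X).1 T4X _ _ (cl1 x) (cl1 y).
  by apply/seteqP; split => z // [-> /= xE]; move: xy; rewrite xE eqxx.
exists (U, V) => /=; first by split; rewrite inE; [exact: xU | exact: yV].
by split => //; apply/eqP.
Qed.

Lemma compact_urysohn_C0 (C U : set X) : compact C -> open U -> C `<=` U ->
  exists g : X -> R, [/\ C0 g, (forall x, 0 <= g x <= 1),
    (forall x, C x -> g x = 1) & (forall x, ~ U x -> g x = 0)].
Proof.
move=> cC oU CU.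
have [W [oW CW WU [D cD WD]]] := compact_open_relcompact_nbhs _ _ lcX cC oU CU.
have sep : uniform_separator (~` W) C.
  apply: normal_uniform_separator => //.
  - exact: open_closedC.
  - exact: compact_closed.
  - by apply/seteqP; split => z // [nWz /CW].
have [g [gC g01 g0 g1]] := (@uniform_separatorP X R _ _).1 sep.
have gW x : ~ W x -> g x = 0 by move=> nWx; apply: g0; exists x.
exists g; split.
- split => // e e0; apply: (subclosed_compact (closed_normr_ge gC e) cD).
  move=> x /= ex; apply: WD; apply: contrapT => nWx.
  by move: ex; rewrite gW // normr0 leNgt e0.
- move=> x; have : `[0, 1]%classic (g x) by apply: g01; exists x.
  by rewrite /= in_itv.
- by move=> x Cx; apply: g1; exists x.
- by move=> x nUx; apply: gW => /WU.
Qed.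

Lemma C0_sphere_bump (C U : set X) : compact C -> C !=set0 -> open U ->
  C `<=` U -> exists2 g : X -> R, C0_sphere g &
    (forall x, C x -> g x = 1) /\ (forall x, ~ U x -> g x = 0).
Proof.
move=> cC [x0 Cx0] oU CU.
have [g [gC0 g01 g1 g0]] := compact_urysohn_C0 _ _ cC oU CU.
have gle1 x : `|g x| <= 1 by have /andP[g0x g1x] := g01 x; rewrite ger0_norm.
exists g => //; split => //; apply/le_anti/andP; split.
  exact: (supnorm_le x0 gle1).
by rewrite -[leLHS]normr1 -(g1 x0 Cx0); exact: (normr_le_supnorm x0 gle1).
Qed.

End compact_bump.

Definition small_compact_unions_not_dense (X : topologicalType) (K : Type) :=
  forall F : set (set X), (forall C, F C -> compact C) ->
    card_lt F [set: K] -> ~ dense (\bigcup_(C in F) C).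

Section C0_squareness.
Context {R : realType} {X : topologicalType} {K : Type}.
Hypotheses (T1X : accessible_space X) (T4X : normal_space X).
Hypothesis lcX : locally_compact [set: X].

Lemma C0_SQ_ASQ : C0_SQ_lt R X K -> C0_ASQ_lt R X K.
Proof.
move=> SQ A AS AK e e0; have [y yS yA] := SQ A AS AK; exists y => // x Ax.
by have [xy1 xy2] := yA x Ax; split; lra.
Qed.

Lemma C0_ASQ_small_compact_unions :
  C0_ASQ_lt R X K -> small_compact_unions_not_dense X K.
Proof.
move=> ASQ F cF FK dF.
have /choice[bump bumpP] : forall C : set X, exists g : X -> R,
    F C /\ C !=set0 -> C0_sphere g /\ (forall x, C x -> g x = 1).
  move=> C; have [[FC C0]|nC] := pselect (F C /\ C !=set0); last first.
    by exists (fun=> 0) => /nC.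
  have [g gS [g1 _]] := C0_sphere_bump (R:=R) T1X T4X lcX _ _ (cF C FC) C0 openT
    (@subsetT _ C).
  by exists g.
pose A := bump @` [set C | F C /\ C !=set0].
have AS : A `<=` @C0_sphere R X by move=> _ [C FC <-]; have [] := bumpP C FC.
have AK : card_lt A [set: K].
  apply: card_le_lt_trans FK; apply: card_le_trans (card_image_le _ _) _.
  by apply: subset_card_le => C [].
have [y yS yA] := ASQ A AS AK (1/4) ltac:(lra).
have [x0 yx0] := C0_sphere_near1 (1/4 : R) yS ltac:(lra).
have yx0N0 : [set x | 3/4 < `|y x|] !=set0 by exists x0 => /=; lra.
have [x [/= yx [C FC Cx]]] := dF _ yx0N0 (open_normr_gt yS.1.1 _).
have CN0 : F C /\ C !=set0 by split => //; exists x.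
have [gS g1] := bumpP C CN0.
have /yA[gy1 gy2] : A (bump C) by exists C.
have leD z : `|(bump C \+ y) z| <= 2.
  apply: le_trans (ler_normD _ _) _.
  by have := C0_sphere_le1 gS z; have := C0_sphere_le1 yS z; lra.
have leB z : `|(bump C \- y) z| <= 2.
  apply: le_trans (ler_normB _ _) _.
  by have := C0_sphere_le1 gS z; have := C0_sphere_le1 yS z; lra.
have := normr_le_supnorm x leD; have := normr_le_supnorm x leB.
rewrite /= g1 //.
case: (lerP 0 (y x)) yx => [y0|y0].
  by rewrite (ger0_norm y0) (ger0_norm (x := 1 + y x)); lra.
by rewrite (ltr0_norm y0) (ger0_norm (x := 1 - y x)); lra.
Qed.

Lemma small_compact_unions_C0_SQ : ~ countable [set: K] ->
  small_compact_unions_not_dense X K -> C0_SQ_lt R X K.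
Proof.
move=> nK small A AS AK.
pose level (p : (X -> R) * nat) := [set x | p.2.+1%:R^-1 <= `|p.1 x|].
pose F := level @` (A `*` [set: nat]).
have cF C : F C -> compact C.
  by case=> -[f n] [/= Af _] <-; apply: (AS f Af).1.2; rewrite invr_gt0.
have FK : card_lt F [set: K].
  exact: card_le_lt_trans (card_image_le _ _) (card_lt_setXnat nK AK).
have [W [[x0 [oW Wx0]] WF]] := denseNE (small F cF FK).
have A0 f x : A f -> W x -> f x = 0.
  move=> Af Wx; apply: contrapT => fx0.
  have fx_gt0 : 0 < `|f x| by rewrite normr_gt0; apply/eqP.
  have [n _ fxn] := near_infty_natSinv_lt (PosNum fx_gt0).
  suff : (W `&` \bigcup_(C in F) C) x by rewrite WF.
  split => //; exists (level (f, n)); first by exists (f, n).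
  exact/ltW/(fxn n (leqnn n)).
have x0W : [set x0] `<=` W by move=> x ->.
have [g gS [_ g0]] := C0_sphere_bump (R:=R) T1X T4X lcX _ _ (@compact_set1 _ x0)
  (ex_intro _ x0 erefl) oW x0W.
exists g => // f Af.
apply: (supnorm_disjoint_le1 f g x0 _ (C0_sphere_le1 (AS f Af))
  (C0_sphere_le1 gS)).
by move=> x; have [/(A0 f x Af)|/g0] := pselect (W x); [left|right].
Qed.

End C0_squareness.

Theorem theorem2p7 (R : realType) (X : topologicalType) (K : Type) :
  accessible_space X -> normal_space X -> locally_compact [set: X] ->
  ~ countable [set: K] ->
  [/\ (C0_SQ_lt R X K <-> C0_ASQ_lt R X K) &
      (C0_ASQ_lt R X K <->
        (forall F : set (set X), (forall C, F C -> compact C) ->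
           card_lt F [set: K] -> ~ dense (\bigcup_(C in F) C)))].
Proof.
move=> T1X T4X lcX nK.
have ASQ_iii := C0_ASQ_small_compact_unions (R:=R) (K:=K) T1X T4X lcX.
have iii_SQ := small_compact_unions_C0_SQ (R:=R) T1X T4X lcX nK.
split; split.
- exact: C0_SQ_ASQ.
- by move/ASQ_iii/iii_SQ.
- exact: ASQ_iii.
- by move/iii_SQ/C0_SQ_ASQ.
Qed.
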